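(* Let $\mathbb{F}$ be a field and $0\neq h\in\mathbb{F}[x]$, and let $A=A_h$ be the unital $\mathbb{F}$-algebra generated by $x,\hat y$ with $\hat yx-x\hat y=h$. Then $[\mathbb{F}[x],A]=[x,A]$.
   Context: For subsets $S,T$ of $A$, $[S,T]$ denotes the $\mathbb{F}$-linear span of all commutators $[s,t]=st-ts$ with $s\in S,t\in T$; $[x,A]=\{[x,a]:a\in A\}$. *)

From HB Require Import structures.
From mathcomp Require Import all_boot all_order all_algebra.
Set Implicit Arguments. Unset Strict Implicit. Unset Printing Implicit Defensive.
Import Order.TTheory GRing.Theory Num.Theory.
Local Open Scope ring_scope.

(* The algebra A_h = F<x, yhat | yhat x - x yhat = h> is realised concretely
   as the Ore extension F[x][yhat; D] with D = h * d/dx, using its normal form: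
   an element is  sum_j p_j(x) yhat^j,  represented by the polynomial
   p : {poly {poly F}} whose j-th coefficient p`_j is p_j (coefficients on the
   left of powers of yhat).  *)
Section Ah.
Variable F : fieldType.
Variable h : {poly F}.

(* the derivation D g = h g' of F[x], so that yhat g = g yhat + D g *)
Definition Dh (g : {poly F}) : {poly F} := h * g^`().

(* multiplication on normal forms:
   (f yhat^i)(g yhat^j) = sum_k C(i,k) f D^k(g) yhat^(i-k+j) *)
Definition Amul (p q : {poly {poly F}}) : {poly {poly F}} :=
  \sum_(i < size p) \sum_(j < size q) \sum_(k < i.+1)
     ((p`_i * ('C(i, k)%:R * iter k Dh q`_j))%:P * 'X^(i - k + j)).

Definition Acomm (a b : {poly {poly F}}) : {poly {poly F}} :=
  Amul a b - Amul b a.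

Definition Ax : {poly {poly F}} := ('X : {poly F})%:P.
Definition Apoly (f : {poly F}) : {poly {poly F}} := f%:P.

Definition comm_span (S T : {poly {poly F}} -> Prop) (b : {poly {poly F}}) : Prop :=
  exists n (c : 'I_n -> F) (s t : 'I_n -> {poly {poly F}}),
    (forall i, S (s i) /\ T (t i)) /\
    b = \sum_(i < n) (c i)%:P%:P * Acomm (s i) (t i).

End Ah.

(* Elements of A_h are normal forms sum_i q_i yhat^i with q_i in F[x], and
   yhat^i f = sum_k C(i,k) D^k(f) yhat^(i-k) for the derivation D = h d/dx.
   Hence right multiplication by f in F[x] is a Taylor-type operator
   q |-> sum_k D^k(f) q^(k)/k! (derivatives in yhat), left multiplication is
   plain polynomial multiplication, and [f, q] = f q - q f.  Since
   (q f) g = q (f g), writing f = p x + c gives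
     [p x + c, q] = x [p, q] + [x, q p],
   and since x [x, a] = [x, x a], induction on deg f puts [f, q] into [x, A]. *)

From HB Require Import structures.
From mathcomp Require Import all_boot all_order all_algebra.
From mathcomp Require Import ring.
Set Implicit Arguments. Unset Strict Implicit. Unset Printing Implicit Defensive.
Import GRing.Theory.
Local Open Scope ring_scope.

Section OreRightMultiplication.
Variables (R : comNzRingType) (D : {additive R -> R}).

Lemma iter_raddfD k : {morph iter k D : a b / a + b}.
Proof. by elim: k => // k IHk a b; rewrite !iterS IHk raddfD. Qed.

(* [ore_mulr a q] is the product q * a in the Ore extension R[yhat; D]. *)
Definition ore_mulr (a : R) (q : {poly R}) : {poly R} :=
  \sum_(k < size q) (iter k D a)%:P * q^`N(k).

Lemma ore_mulr_wide n a (q : {poly R}) : (size q <= n)%N ->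
  ore_mulr a q = \sum_(k < n) (iter k D a)%:P * q^`N(k).
Proof.
move=> le_q_n; rewrite /ore_mulr.
rewrite (big_ord_widen n (fun k => (iter k D a)%:P * q^`N(k))) // big_mkcond.
apply: eq_bigr => k _.
by case: leqP => // /nderivn_poly0 ->; rewrite mulr0.
Qed.

Lemma ore_mulr_is_linear a : linear (ore_mulr a).
Proof.
move=> c p q; set n := maxn (size p) (size q).
have le_pn : (size p <= n)%N by rewrite leq_maxl.
have le_qn : (size q <= n)%N by rewrite leq_maxr.
have le_cpq : (size (c *: p + q)%R <= n)%N.
  rewrite (leq_trans (size_polyD _ _)) // geq_max le_qn andbT.
  exact: leq_trans (size_scale_leq _ _) le_pn.
rewrite !(ore_mulr_wide _ le_pn, ore_mulr_wide _ le_qn, ore_mulr_wide _ le_cpq).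
rewrite scaler_sumr -big_split; apply: eq_bigr => k _.
by rewrite linearP mulrDr scalerAr.
Qed.

HB.instance Definition _ a :=
  GRing.isLinear.Build R {poly R} {poly R} *:%R (ore_mulr a)
    (ore_mulr_is_linear a).

Lemma ore_mulrDr a b q : ore_mulr (a + b) q = ore_mulr a q + ore_mulr b q.
Proof.
rewrite /ore_mulr -big_split; apply: eq_bigr => k _.
by rewrite iter_raddfD polyCD mulrDl.
Qed.

Lemma ore_mulr0 q : ore_mulr 0 q = 0.
Proof. by apply: (addrI (ore_mulr 0 q)); rewrite -ore_mulrDr !addr0. Qed.

Lemma ore_mulr_polyC a c : ore_mulr a c%:P = (c * a)%:P.
Proof.
rewrite (ore_mulr_wide _ (size_polyC_leq1 c)) big_ord1 nderivn0 /=.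
by rewrite -polyCM mulrC.
Qed.

Lemma ore_mulr_mulX a q :
  ore_mulr a (q * 'X) = ore_mulr a q * 'X + ore_mulr (D a) q.
Proof.
set n := size q.
have le_qn : (size q <= n.+1)%N by rewrite leqW.
have le_qXn : (size (q * 'X)%R <= n.+1)%N.
  by rewrite (leq_trans (size_polyMleq _ _)) // size_polyX addn2.
rewrite (ore_mulr_wide _ le_qXn) (ore_mulr_wide _ le_qn).
rewrite (ore_mulr_wide _ (leqnn n)).
rewrite !big_ord_recl /= !nderivn0 mulrDl -addrA mulrA; congr (_ + _).
rewrite mulr_suml -big_split; apply: eq_bigr => k _ /=.
rewrite -[q * 'X]addr0 -polyC0 nderivnMXaddC mulrDr mulrA addrC.
by rewrite -iterS iterSr.
Qed.

Lemma ore_mulr_monomial a c i :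
  ore_mulr a (c *: 'X^i) =
    \sum_(k < i.+1) (c * ('C(i, k)%:R * iter k D a))%:P * 'X^(i - k).
Proof.
have le_cXi : (size (c *: 'X^i) <= i.+1)%N.
  by rewrite (leq_trans (size_scale_leq _ _)) ?size_polyXn.
rewrite (ore_mulr_wide _ le_cXi); apply: eq_bigr => k _.
by rewrite nderivnZ nderivnXn -mul_polyC -mulr_natl !polyCM rmorph_nat; ring.
Qed.

Lemma ore_mulr_const a q : D a = 0 -> ore_mulr a q = a%:P * q.
Proof.
move=> Da0; rewrite (ore_mulr_wide _ (leqnSn _)) big_ord_recl nderivn0 /=.
rewrite big1 ?addr0 // => k _.
by rewrite add0n -iterS iterSr Da0 (iter_fix _ (raddf0 D)) polyC0 mul0r.
Qed.

Hypothesis DM : forall a b, D (a * b) = D a * b + a * D b.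

Lemma ore_mulrM a b q : ore_mulr (a * b) q = ore_mulr b (ore_mulr a q).
Proof.
elim/poly_ind: q a b => [|q c IHq] a b; first by rewrite !raddf0.
rewrite !raddfD /= !ore_mulr_mulX !ore_mulr_polyC !raddfD /= ore_mulr_mulX.
rewrite DM ore_mulrDr !IHq mulrA; congr (_ + _).
by rewrite addrA addrAC.
Qed.

End OreRightMultiplication.

Section PolynomialCommutators.
Variables (F : fieldType) (h : {poly F}).

Fact Dh_is_zmod_morphism : zmod_morphism (Dh h).
Proof. by move=> f g; rewrite /Dh derivB mulrBr. Qed.

HB.instance Definition _ :=
  GRing.isZmodMorphism.Build {poly F} {poly F} (Dh h) Dh_is_zmod_morphism.

Lemma DhM f g : Dh h (f * g) = Dh h f * g + f * Dh h g.
Proof. by rewrite /Dh derivM; ring. Qed.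

Lemma Dh_polyC c : Dh h c%:P = 0.
Proof. by rewrite /Dh derivC mulr0. Qed.

Lemma Amul_polyCl f q : Amul h (Apoly f) q = f%:P * q.
Proof.
rewrite /Amul /Apoly size_polyC; have [->|_] := eqVneq f 0.
  by rewrite big_ord0 mul0r.
rewrite big_ord1 -[q in RHS]coefK poly_def mulr_sumr; apply: eq_bigr => j _.
by rewrite big_ord1 /= mulr1n mul1r add0n coefC -mul_polyC polyCM mulrA.
Qed.

Lemma Amul_polyCr q f : Amul h q (Apoly f) = ore_mulr (Dh h) f q.
Proof.
rewrite /Amul /Apoly size_polyC; have [->|_] := eqVneq f 0.
  by rewrite ore_mulr0; apply: big1 => i _; rewrite big_ord0.
rewrite -[q in RHS]coefK poly_def linear_sum; apply: eq_bigr => i _ /=.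
rewrite big_ord1 ore_mulr_monomial coefC /=.
by apply: eq_bigr => k _; rewrite addn0.
Qed.

Lemma AxE : Ax F = Apoly 'X.
Proof. by []. Qed.

Lemma Acomm_polyCE f q : Acomm h (Apoly f) q = f%:P * q - ore_mulr (Dh h) f q.
Proof. by rewrite /Acomm Amul_polyCl Amul_polyCr. Qed.

Fact Acomm_polyC_is_linear f : linear (Acomm h (Apoly f)).
Proof. by move=> g p q; rewrite !Acomm_polyCE linearP /= -!mul_polyC; ring. Qed.

HB.instance Definition _ f :=
  GRing.isLinear.Build {poly F} {poly {poly F}} {poly {poly F}} *:%R
    (Acomm h (Apoly f)) (Acomm_polyC_is_linear f).

Lemma Acomm_polyC_mull g f q :
  g%:P * Acomm h (Apoly f) q = Acomm h (Apoly f) (g%:P * q).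
Proof. by rewrite !mul_polyC linearZ. Qed.

Lemma Acomm_polyMXaddC p c q :
  Acomm h (Apoly (p * 'X + c%:P)) q =
    'X%:P * Acomm h (Apoly p) q + Acomm h (Apoly 'X) (ore_mulr (Dh h) p q).
Proof.
rewrite !Acomm_polyCE ore_mulrDr (ore_mulrM DhM).
by rewrite (ore_mulr_const _ (Dh_polyC c)) polyCD polyCM; ring.
Qed.

Lemma Acomm_polyC_AcommX f q :
  exists a, Acomm h (Apoly f) q = Acomm h (Apoly 'X) a.
Proof.
elim/poly_ind: f q => [|p c IHp] q.
  by exists 0; rewrite Acomm_polyCE ore_mulr0 !raddf0 mul0r addr0.
rewrite Acomm_polyMXaddC; have [a ->] := IHp q.
exists ('X%:P * a + ore_mulr (Dh h) p q).
by rewrite raddfD Acomm_polyC_mull.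
Qed.

End PolynomialCommutators.

Theorem lemma2p2 (F : fieldType) (h : {poly F}) (hnz : h != 0)
    (b : {poly {poly F}}) :
  comm_span h (fun s => exists f : {poly F}, s = Apoly f) (fun _ => True) b
  <-> exists a : {poly {poly F}}, b = Acomm h (Ax F) a.
Proof.
rewrite AxE; split=> [[n [c [s [t [st_def ->]]]]] | [a ->]].
  apply: (big_ind (fun b => exists a, b = Acomm h (Apoly 'X) a)).
  - by exists 0; rewrite raddf0.
  - by move=> _ _ [a1 ->] [a2 ->]; exists (a1 + a2); rewrite raddfD.
  move=> i _; have [[f ->] _] := st_def i.
  have [a ->] := Acomm_polyC_AcommX h f (t i).
  by exists ((c i)%:P%:P * a); rewrite Acomm_polyC_mull.
exists 1%N, (fun _ => 1), (fun _ => Apoly 'X), (fun _ => a); split=> [i|].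
  by split=> //; exists 'X.
by rewrite big_ord1 mul1r.
Qed.
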